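(* Hadamard graphs are not distance magic; i.e., no Hadamard graph admits a distance magic labeling.
   Context: For a Hadamard matrix $H=(h_{ij})$ of order $m$ (an $m\times m$ matrix with entries $\pm1$ and $HH^T=mI$), the Hadamard graph has $4m$ vertices $r_i^{+},r_i^{-},c_j^{+},c_j^{-}$ ($1\le i,j\le m$), where $r_i^{+}\sim c_j^{+}$ and $r_i^{-}\sim c_j^{-}$ if $h_{ij}=1$, and $r_i^{+}\sim c_j^{-}$ and $r_i^{-}\sim c_j^{+}$ if $h_{ij}=-1$. A distance magic labeling of a graph $G$ of order $N$ is a bijection $f:V(G)\to\{1,\dots,N\}$ such that $\sum_{y\in N(x)}f(y)$ is the same for every vertex $x$, where $N(x)$ is the open neighborhood of $x$. *)

From HB Require Import structures.
From mathcomp Require Import all_boot all_order all_algebra.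
Set Implicit Arguments. Unset Strict Implicit. Unset Printing Implicit Defensive.
Import GRing.Theory Num.Theory.
Local Open Scope ring_scope.

Definition is_hadamard (m : nat) (H : 'M[int]_m) : Prop :=
  (forall i j, H i j = 1 \/ H i j = -1) /\ H *m H^T = (m%:R)%:M.

(* Vertices of the Hadamard graph: (is_row, is_plus, index).
   (true, true, i) = r_i^+, (true, false, i) = r_i^-,
   (false, true, j) = c_j^+, (false, false, j) = c_j^-. *)
Definition hvert (m : nat) : finType := (bool * bool * 'I_m)%type.

Definition hadamard_adj (m : nat) (H : 'M[int]_m) : rel (hvert m) :=
  fun x y =>
    let: (rx, sx, i) := x in
    let: (ry, sy, j) := y in
    (rx != ry) &&
    ((if rx then H i j else H j i) == if sx == sy then 1 else -1).

(* Distance magic labeling: a bijection f : V -> {1,..,N} (N = |V|),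
   given as an injective map with values in [1, N], such that the sum of
   labels over the open neighbourhood is constant. *)
Definition distance_magic (T : finType) (adj : rel T) : Prop :=
  exists f : T -> nat,
    [/\ injective f,
        (forall x, 1 <= f x <= #|T|)%N &
        exists k : nat, forall x, (\sum_(y | adj x y) f y)%N = k].

(* For each i, the column vertices c_j^+ and c_j^- are adjacent to exactly one
   of r_i^+, r_i^-, and which one is swapped between them and decided by the
   sign of h_ij.  Hence, for a distance magic labeling f, equating the
   neighbourhood sums of c_j^+ and c_j^- gives
   sum_i (f r_i^+ - f r_i^-) h_ij = 0 for every j: the row vector of these
   gaps is killed by H.  As H H^T = m I with m > 0, that vector is zero, so
   f r_i^+ = f r_i^-, contradicting injectivity. *)

From mathcomp Require Import all_boot all_order all_algebra.
From mathcomp Require Import ring.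

Set Implicit Arguments.
Unset Strict Implicit.
Unset Printing Implicit Defensive.

Import GRing.Theory Num.Theory.
Local Open Scope ring_scope.

Lemma mulmx_eq0_scalar_rinv (R : idomainType) (n p : nat)
    (A : 'M[R]_(n, p)) (B : 'M[R]_(p, n)) (c : R) (v : 'rV[R]_n) :
  A *m B = c%:M -> c != 0 -> v *m A = 0 -> v = 0.
Proof.
move=> AB c_neq0 vA0; apply/rowP => i; apply/eqP.
have /rowP/(_ i) := congr1 (mulmx^~ B) vA0.
rewrite -mulmxA AB mul_mx_scalar mul0mx !mxE => /eqP.
by rewrite mulf_eq0 (negbTE c_neq0).
Qed.

Lemma sum_hvert (R : nmodType) (m : nat) (G : hvert m -> R) :
  \sum_(y : hvert m) G y =
  \sum_(i < m) ((G (true, true, i) + G (true, false, i))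
                + (G (false, true, i) + G (false, false, i))).
Proof.
rewrite (eq_bigr (fun y => G (y.1.1, y.1.2, y.2))) => [|[[]]//].
rewrite -(pair_bigA _ (fun p i => G (p.1, p.2, i))) /=.
rewrite -(pair_bigA _ (fun a b => \sum_(i < m) G (a, b, i))) /=.
by rewrite !big_bool -!big_split.
Qed.

Definition row_label_gap (m : nat) (f : hvert m -> nat) : 'rV[int]_m :=
  \row_i ((f (true, true, i))%:Z - (f (true, false, i))%:Z).

Lemma col_nbhd_sumB (m : nat) (H : 'M[int]_m) (f : hvert m -> nat) (j : 'I_m) :
  (forall i j, H i j = 1 \/ H i j = -1) ->
  (\sum_(y | hadamard_adj H (false, true, j) y) f y)%:Z
  - (\sum_(y | hadamard_adj H (false, false, j) y) f y)%:Z
  = (row_label_gap f *m H) 0 j.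
Proof.
move=> H_pm1.
rewrite -!natz !natr_sum !(big_mkcond (hadamard_adj H _)) -sumrB sum_hvert mxE.
apply: eq_bigr => i _; rewrite mxE /= !natz.
by case: (H_pm1 i j) => ->; rewrite /=; ring.
Qed.

Theorem corollary2p8 (m : nat) (H : 'M[int]_m) :
  (0 < m)%N -> is_hadamard H -> ~ distance_magic (hadamard_adj H).
Proof.
move=> m_gt0 [H_pm1 HHt] [f [f_inj _ [k nbhd_sum_k]]].
have gapH0 : row_label_gap f *m H = 0.
  by apply/rowP => j; rewrite -(col_nbhd_sumB _ _ H_pm1) !nbhd_sum_k subrr mxE.
have m_neq0 : m%:R != 0 :> int by rewrite pnatr_eq0 -lt0n.
have /rowP/(_ (Ordinal m_gt0)) := mulmx_eq0_scalar_rinv HHt m_neq0 gapH0.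
by rewrite !mxE => /eqP; rewrite subr_eq0 => /eqP [] /f_inj.
Qed.
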